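(* Let $T$ be the monad on $\mathsf{Set}$ associated to a Mal'cev algebraic theory (so that $T$-algebras are the models of the theory). Then every $T$-algebra $(A,e)$ is indiscrete, and the partial evaluation relation on $TA$ is an equivalence relation.
   Context: A Mal'cev operation on a set $A$ is a ternary operation $m$ with $m(a,b,b)=a$ and $m(a,a,b)=b$ for all $a,b\in A$; a Mal'cev theory is an algebraic (Lawvere/equational) theory containing a ternary operation satisfying these identities. A $T$-algebra $(A,e)$ is indiscrete if for all $t_0,t_1\in TA$ with $e(t_0)=e(t_1)$ there is $\tau\in TTA$ with $\mu_A(\tau)=t_0$ and $(Te)(\tau)=t_1$ (i.e. the algebra square formed by $\mu_A,Te,e,e$ is a weak pullback). The partial evaluation relation on $TA$ consists of the pairs $(\mu_A(\tau),(Te)(\tau))$ for $\tau\in TTA$. *)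

From mathcomp Require Import all_boot.
Set Implicit Arguments. Unset Strict Implicit. Unset Printing Implicit Defensive.

(* A monad on Set (modelled by Type), given as a Kleisli-free triple
   (T, T on maps, unit, multiplication) together with the functor and monad laws,
   all stated pointwise. *)
Record monad := Monad {
  T : Type -> Type;
  fmap : forall A B : Type, (A -> B) -> T A -> T B;
  eta : forall A : Type, A -> T A;
  mu : forall A : Type, T (T A) -> T A;
  fmap_id : forall A (t : T A), fmap (fun x => x) t = t;
  fmap_comp : forall A B C (f : A -> B) (g : B -> C) (t : T A),
      fmap (fun x => g (f x)) t = fmap g (fmap f t);
  eta_nat : forall A B (f : A -> B) (a : A), fmap f (eta a) = eta (f a);
  mu_nat : forall A B (f : A -> B) (t : T (T A)),
      fmap f (mu t) = mu (fmap (fmap f) t);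
  mu_eta_l : forall A (t : T A), mu (eta t) = t;
  mu_eta_r : forall A (t : T A), mu (fmap (@eta A) t) = t;
  mu_assoc : forall A (t : T (T (T A))), mu (mu t) = mu (fmap (@mu A) t)
}.

Arguments fmap {m A B} f t.
Arguments eta {m A} a.
Arguments mu {m A} t.

Definition is_algebra (M : monad) (A : Type) (e : T M A -> A) : Prop :=
  (forall a : A, e (eta a) = a) /\
  (forall t : T M (T M A), e (mu t) = e (fmap e t)).

(* The monad is finitary (i.e. comes from an algebraic / Lawvere theory):
   every element of T A lies in the image of T applied to a map from a
   finite set.  For Set-functors this is equivalent to preserving filtered
   colimits. *)
Definition finitary (M : monad) : Prop :=
  forall (A : Type) (t : T M A),
    exists (n : nat) (f : 'I_n -> A) (s : T M 'I_n), fmap f s = t.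

(* Variable substitutions 3 -> 2 used for the Mal'cev identities:
   malcev_s1 : x0 |-> x0, x1 |-> x1, x2 |-> x1   (m(x,y,y))
   malcev_s2 : x0 |-> x0, x1 |-> x0, x2 |-> x1   (m(x,x,y)) *)
Definition malcev_s1 (i : 'I_3) : 'I_2 := inord (if val i == 0 then 0 else 1).
Definition malcev_s2 (i : 'I_3) : 'I_2 := inord (if val i == 2 then 1 else 0).

(* The theory has a (derived) ternary Mal'cev operation: a ternary term
   p in T 3 with p(x,y,y) = x and p(x,x,y) = y in T 2. *)
Definition malcev_theory (M : monad) : Prop :=
  exists p : T M 'I_3,
    fmap malcev_s1 p = eta (inord 0 : 'I_2) /\
    fmap malcev_s2 p = eta (inord 1 : 'I_2).

Definition partial_eval (M : monad) (A : Type) (e : T M A -> A)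
    (t0 t1 : T M A) : Prop :=
  exists tau : T M (T M A), mu tau = t0 /\ fmap e tau = t1.

Definition indiscrete (M : monad) (A : Type) (e : T M A -> A) : Prop :=
  forall t0 t1 : T M A, e t0 = e t1 ->
    exists tau : T M (T M A), mu tau = t0 /\ fmap e tau = t1.

Definition equivalence_relation (X : Type) (R : X -> X -> Prop) : Prop :=
  (forall x, R x x) /\
  (forall x y, R x y -> R y x) /\
  (forall x y z, R x y -> R y z -> R x z).

(* The Mal'cev term p, interpreted in the free algebras, gives a ternary
   operation m on every T X that is natural in X and commutes with mu.
   If e t0 = e t1, then tau := m (eta t0) (eta t1) (T eta t1) satisfies
   mu tau = m t0 t1 t1 = t0 and T e tau = m (eta (e t1)) (eta (e t1)) t1 = t1.
   So every algebra is indiscrete, partial evaluation coincides with the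
   kernel of e, and is therefore an equivalence relation. *)

From mathcomp Require Import all_boot.
From Stdlib Require Import FunctionalExtensionality.

Set Implicit Arguments.
Unset Strict Implicit.
Unset Printing Implicit Defensive.

Section MonadFacts.
Variable M : monad.

Lemma eq_fmap (X Y : Type) (f g : X -> Y) (t : T M X) :
  (forall x, f x = g x) -> fmap f t = fmap g t.
Proof. by move=> fg; rewrite (functional_extensionality f g fg). Qed.

Lemma fmap_eta_algebraK (A : Type) (e : T M A -> A) (t : T M A) :
  is_algebra e -> fmap e (fmap eta t) = t.
Proof.
move=> [e_eta _]; rewrite -fmap_comp -[RHS]fmap_id.
by apply: eq_fmap => a; rewrite e_eta.
Qed.

End MonadFacts.

Definition sel3 (X : Type) (x y z : X) (i : 'I_3) : X :=
  if i == 0 :> nat then x else if i == 1 :> nat then y else z.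

Definition sel2 (X : Type) (x y : X) (j : 'I_2) : X :=
  if j == 0 :> nat then x else y.

Lemma sel3_morph (X Y : Type) (f : X -> Y) (x y z : X) (i : 'I_3) :
  f (sel3 x y z i) = sel3 (f x) (f y) (f z) i.
Proof. by rewrite /sel3; case: ifP => //; case: ifP. Qed.

Lemma sel3_malcev_s1 (X : Type) (x y : X) (i : 'I_3) :
  sel3 x y y i = sel2 x y (malcev_s1 i).
Proof. by case: i => [[|[|[|k]]] ltk3]; rewrite /sel2 /malcev_s1 /= ?inordK. Qed.

Lemma sel3_malcev_s2 (X : Type) (x y : X) (i : 'I_3) :
  sel3 x x y i = sel2 x y (malcev_s2 i).
Proof. by case: i => [[|[|[|k]]] ltk3]; rewrite /sel2 /malcev_s2 /= ?inordK. Qed.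

Section MalcevOperation.
Variable M : monad.
Variable p : T M 'I_3.
Hypothesis p_xyy : fmap malcev_s1 p = eta (inord 0 : 'I_2).
Hypothesis p_xxy : fmap malcev_s2 p = eta (inord 1 : 'I_2).

Definition malcev_op (X : Type) (x y z : T M X) : T M X :=
  mu (fmap (sel3 x y z) p).

Lemma malcev_op_xyy (X : Type) (x y : T M X) : malcev_op x y y = x.
Proof.
rewrite /malcev_op (eq_fmap _ (sel3_malcev_s1 x y)) fmap_comp p_xyy.
by rewrite eta_nat mu_eta_l /sel2 inordK.
Qed.

Lemma malcev_op_xxy (X : Type) (x y : T M X) : malcev_op x x y = y.
Proof.
rewrite /malcev_op (eq_fmap _ (sel3_malcev_s2 x y)) fmap_comp p_xxy.
by rewrite eta_nat mu_eta_l /sel2 inordK.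
Qed.

Lemma mu_malcev_op (X : Type) (x y z : T M (T M X)) :
  mu (malcev_op x y z) = malcev_op (mu x) (mu y) (mu z).
Proof.
rewrite /malcev_op mu_assoc -fmap_comp.
by congr (mu _); apply: eq_fmap => i; exact: sel3_morph.
Qed.

Lemma fmap_malcev_op (X Y : Type) (f : X -> Y) (x y z : T M X) :
  fmap f (malcev_op x y z) = malcev_op (fmap f x) (fmap f y) (fmap f z).
Proof.
rewrite /malcev_op mu_nat -fmap_comp.
by congr (mu _); apply: eq_fmap => i; exact: sel3_morph.
Qed.

Lemma malcev_algebra_indiscrete (A : Type) (e : T M A -> A) :
  is_algebra e -> indiscrete e.
Proof.
move=> e_alg t0 t1 e_t01.
exists (malcev_op (eta t0) (eta t1) (fmap eta t1)); split.
  by rewrite mu_malcev_op !mu_eta_l mu_eta_r malcev_op_xyy.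
rewrite fmap_malcev_op !eta_nat fmap_eta_algebraK // e_t01.
exact: malcev_op_xxy.
Qed.

End MalcevOperation.

Section PartialEvaluation.
Variables (M : monad) (A : Type) (e : T M A -> A).
Hypothesis e_alg : is_algebra e.

Lemma partial_eval_eq (t0 t1 : T M A) : partial_eval e t0 t1 -> e t0 = e t1.
Proof. by case: e_alg => _ e_mu [tau [<- <-]]; rewrite e_mu. Qed.

Lemma indiscrete_partial_eval_equiv :
  indiscrete e -> equivalence_relation (partial_eval e).
Proof.
move=> e_ind; split; [|split].
- by move=> t; apply: e_ind.
- by move=> t0 t1 /partial_eval_eq e_t01; apply: e_ind.
- move=> t0 t1 t2 /partial_eval_eq e_t01 /partial_eval_eq e_t12.
  by apply: e_ind; rewrite e_t01.
Qed.

End PartialEvaluation.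

Theorem corollary3p12 (M : monad) (Hfin : finitary M) (Hmal : malcev_theory M)
    (A : Type) (e : T M A -> A) (He : is_algebra e) :
  indiscrete e /\ equivalence_relation (partial_eval e).
Proof.
have [p [p_xyy p_xxy]] := Hmal.
have e_ind : indiscrete e := malcev_algebra_indiscrete p_xyy p_xxy He.
by split; last exact: indiscrete_partial_eval_equiv.
Qed.
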